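(* Let $D$ be a strongly connected digraph with $\chi(D)\geq 4$. Then $D$ contains a subdivision of $B(2,1;1)$.
   Context: Digraphs are finite, without loops or parallel arcs (opposite arcs allowed). $\chi(D)$ is the chromatic number of the underlying undirected graph of $D$. A digraph is strongly connected if every vertex can reach every other vertex by a directed path. For positive integers $k_1,k_2,k_3$, a digraph $D$ contains a subdivision of $B(k_1,k_2;k_3)$ if there exist distinct vertices $x,y$ of $D$ and three pairwise internally vertex-disjoint directed paths in $D$: two from $x$ to $y$, of lengths (numbers of arcs) at least $k_1$ and at least $k_2$ respectively, and one from $y$ to $x$ of length at least $k_3$. *)

From mathcomp Require Import all_boot.
Set Implicit Arguments. Unset Strict Implicit. Unset Printing Implicit Defensive.

(* A digraph on a finite vertex type V is an arc relation [a : rel V];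
   [a x y] means there is an arc x -> y. Parallel arcs are excluded by
   construction; loops are excluded by the hypothesis [irreflexive a];
   opposite arcs are allowed. *)

Definition und_adj (V : finType) (a : rel V) : rel V :=
  fun x y => a x y || a y x.

Definition proper_coloring (V : finType) (a : rel V) (k : nat) (f : V -> 'I_k) :=
  forall x y, und_adj a x y -> f x != f y.

Definition colorable (V : finType) (a : rel V) (k : nat) :=
  exists f : V -> 'I_k, proper_coloring a f.

Lemma colorable_card (V : finType) (a : rel V) :
  irreflexive a -> colorable a #|V|.
Proof.
move=> irr; exists (@enum_rank V) => x y /orP Hxy.
apply/negP => /eqP /enum_rank_inj exy; subst y.
by case: Hxy; rewrite irr.
Qed.

Definition colorableb (V : finType) (a : rel V) (k : nat) : bool :=
  [exists f : {ffun V -> 'I_k}, [forall x, forall y, und_adj a x y ==> (f x != f y)]].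

Lemma colorableP (V : finType) (a : rel V) k : reflect (colorable a k) (colorableb a k).
Proof.
apply: (iffP existsP) => [[f /forallP Hf]|[f Hf]].
  exists f => x y Hxy; move: (Hf x) => /forallP /(_ y); by rewrite Hxy.
exists (finfun f); apply/forallP => x; apply/forallP => y; rewrite !ffunE.
by apply/implyP => /Hf.
Qed.

Definition chi (V : finType) (a : rel V) (irr : irreflexive a) : nat :=
  ex_minn (ex_intro (fun k => colorableb a k) #|V|
             (introT (colorableP a #|V|) (colorable_card irr))).

Definition strongly_connected (V : finType) (a : rel V) :=
  forall x y : V, connect a x y.

(* A directed path from x to y: the vertex sequence x :: p, pairwise
   distinct, consecutive vertices joined by arcs, ending at y (so p lists the
   vertices after x, the last one being y). Its length (number of arcs) is
   [size p]. *)
Definition dpath (V : finType) (a : rel V) (x y : V) (p : seq V) :=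
  [/\ path a x p, uniq (x :: p) & last x p = y].

Definition internal (V : finType) (p : seq V) : seq V := take (size p).-1 p.

Definition has_B_subdivision (V : finType) (a : rel V) (k1 k2 k3 : nat) :=
  exists x y : V, exists p1 p2 p3 : seq V,
    [/\ x != y,
        [/\ dpath a x y p1, dpath a x y p2 & dpath a y x p3],
        [/\ k1 <= size p1, k2 <= size p2 & k3 <= size p3] &
        [/\ [disjoint internal p1 & internal p2],
            [disjoint internal p1 & internal p3] &
            [disjoint internal p2 & internal p3]]].

From mathcomp Require Import all_boot.
From Stdlib Require Import Classical.
Set Implicit Arguments. Unset Strict Implicit. Unset Printing Implicit Defensive.

(* Grow a vertex set X inducing a strongly
   connected subdigraph, together with a proper 3-colouring of it, starting
   from a single vertex.  If X is not everything, strong connectivity yields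
   an ear: a path leaving X at u and re-entering it at w, with all inner
   vertices outside X.  Assume D has no subdivision of B(2,1;1).  Then
   - w = u: otherwise a path from w back to u inside X, followed by the last
     place z where a u-to-w path inside X meets it, gives two z-to-w paths
     (one through the ear) and a w-to-z path, i.e. a B(2,1;1);
   - for the closed ear u c_1 ... c_k u, the c_i induce a path and every arc
     between them and X is incident with u: any other arc again closes a
     B(2,1;1).
   Hence the c_i can be coloured alternately with the two colours different
   from that of u, and X grows.  So D is 3-colourable, i.e. chi(D) <= 3. *)

Lemma chi_le (V : finType) (a : rel V) (irr : irreflexive a) k :
  colorable a k -> chi irr <= k.
Proof. by rewrite /chi => /colorableP; case: ex_minnP => m _; apply. Qed.

Section Hits.
Variables (T : eqType) (e : rel T) (B : pred T).

Lemma first_hit x p : path e x p -> has B p ->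
  exists q z p', [/\ p = q ++ z :: p', path e x (rcons q z), B z & ~~ has B q].
Proof.
elim: p x => [|y p IH] x //= /andP[exy py].
have [yB _|yB /= hp] := boolP (B y); first by exists [::], y, p; rewrite /= exy.
have [q [z [p' [-> pq zB qB]]]] := IH y py hp.
by exists (y :: q), z, p'; rewrite /= exy negb_or yB.
Qed.

Lemma last_hit x p : path e x p -> has B (x :: p) ->
  exists p1 z q, [/\ x :: p = p1 ++ z :: q, path e z q, B z & ~~ has B q].
Proof.
elim: p x => [|y p IH] x; first by rewrite /= orbF => _ xB; exists [::], x, [::].
move=> /[dup] pxp /andP[_ py] hxp; have [hp|hp] := boolP (has B (y :: p)).
  by have [p1 [z [q [-> pq zB qB]]]] := IH y py hp; exists (x :: p1), z, q.
have xB : B x by case/orP: hxp => // /(negP hp).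
by exists [::], x, (y :: p).
Qed.
End Hits.

Lemma connect_dpath (T : finType) (e : rel T) x y :
  connect e x y -> exists p, dpath e x y p.
Proof. by move=> /connectP[p /shortenP[p' pp' up' _] ->]; exists p'. Qed.

Lemma dpath_return (T : finType) (e : rel T) u w r q :
  u != w -> dpath e w u r -> dpath e u w q ->
  exists r1 z r2 q', [/\ r = r1 ++ z :: r2, path e z (rcons q' w),
                         uniq (w :: q') & ~~ has (mem r) q'].
Proof.
move=> uw [pr ur lr] [pq uq lq].
have /(last_hit pq)[p1 [z [q' [Eq pq' /= zr q'r]]]] : has (mem r) (u :: q).
  by move: (mem_last w r); rewrite lr inE (negbTE uw) /= => ->.
have zw : z != w by apply: contraTneq ur => <-; rewrite cons_uniq negb_and negbK zr.
have lq' : last z q' = w by rewrite -lq -(last_cons u u q) Eq last_cat last_cons.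
case/lastP: q' Eq pq' q'r lq' => [_ _ _ /= zw'|q' w' Eq]; first by rewrite zw' eqxx in zw.
rewrite last_rcons has_rcons negb_or => pq' /andP[_ q'r] ?; subst w'.
move: q'r; case/splitPr: zr => r1 r2 q'r; exists r1, z, r2, q'; split => //.
by move: uq; rewrite Eq cat_uniq cons_uniq rcons_uniq -cons_uniq => /and4P[].
Qed.

Section BSubdivision.
Variables (V : finType) (a : rel V).

Lemma internal_rcons (q : seq V) y : internal (rcons q y) = q.
Proof. by rewrite /internal size_rcons -cats1 take_size_cat. Qed.

Lemma has_B_of_paths x y q1 q2 q3 :
  path a x (rcons q1 y) -> path a x (rcons q2 y) -> path a y (rcons q3 x) ->
  uniq (x :: y :: q1 ++ q2 ++ q3) -> q1 != [::] -> has_B_subdivision a 2 1 1.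
Proof.
move=> p1 p2 p3 uq q1n; exists x, y, (rcons q1 y), (rcons q2 y), (rcons q3 x).
move: uq; rewrite !cons_uniq !inE !mem_cat !cat_uniq !negb_or !has_cat !negb_or.
move=> /and3P[/and4P[xy xq1 xq2 xq3] /and3P[yq1 yq2 yq3]].
move=> /and3P[uq1 /andP[/hasPn d12 /hasPn d13] /and3P[uq2 /hasPn d23 uq3]].
rewrite !internal_rcons !size_rcons !disjoint_has; split => //.
- by split; rewrite /dpath ?last_rcons /= ?rcons_uniq ?mem_rcons ?inE
    ?negb_or ?(eq_sym y) ?xy ?xq1 ?xq2 ?xq3 ?yq1 ?yq2 ?yq3.
- by case: (q1) q1n.
- by split; apply/hasPn => t t1;
    [exact: contraL (d12 t) t1 | exact: contraL (d13 t) t1 | exact: contraL (d23 t) t1].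
Qed.

Lemma has_B_of_chord y z d1 d2 :
  cycle a (y :: d1 ++ z :: d2) -> uniq (y :: d1 ++ z :: d2) -> d1 != [::] ->
  a y z -> has_B_subdivision a 2 1 1.
Proof.
move=> + uc d1n ayz; rewrite /= rcons_cat cat_path /= => /and3P[p1 p1z p3].
apply: (@has_B_of_paths y z d1 [::] d2) => //.
- by rewrite rcons_path p1 p1z.
- by rewrite /= ayz.
- suff /perm_uniq <- : perm_eq (y :: d1 ++ z :: d2) (y :: z :: d1 ++ [::] ++ d2) by [].
  by rewrite perm_cons -cat1s perm_catCA.
Qed.
End BSubdivision.

Section Ears.
Variables (V : finType) (a : rel V).

Definition induced (X : {set V}) : rel V := [rel x y | [&& x \in X, y \in X & a x y]].

Definition strong_on (X : {set V}) := {in X &, forall x y, connect (induced X) x y}.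

Lemma induced_path (X : {set V}) x p :
  x \in X -> path (induced X) x p = all (mem X) p && path a x p.
Proof.
elim: p x => [|y p IH] x xX //=; rewrite /induced /= xX.
by have [yX|yX] := boolP (y \in X); [rewrite IH //= andbCA | rewrite /=].
Qed.

Lemma has_B_of_open_ear (X : {set V}) u w (s : seq V) :
  strong_on X -> u \in X -> w \in X -> u != w -> s != [::] -> uniq s ->
  ~~ has (mem X) s -> path a u (rcons s w) -> has_B_subdivision a 2 1 1.
Proof.
move=> sX uX wX uw sn us sX' pus.
have [r dr] := connect_dpath (sX w u wX uX).
have [q dq] := connect_dpath (sX u w uX wX).
have [r1 [z [r2 [q' [Er pq' uq' q'r]]]]] := dpath_return uw dr dq; subst r.
case: dr; rewrite induced_path // => /andP[Xr pr] ur; rewrite last_cat /= => lr.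
move: pr; rewrite cat_path /= => /and3P[pr1 r1z pr2].
have zX : z \in X by apply: (allP Xr); rewrite mem_cat mem_head orbT.
move: pq'; rewrite induced_path // all_rcons => /andP[/andP[_ Xq'] pq'].
have Xs t : t \in X -> t \notin s by apply: contraL; apply: (hasPn sX').
have uB : uniq (s ++ q' ++ w :: r1 ++ z :: r2).
  move: uq'; rewrite cons_uniq => /andP[wq' uq'].
  rewrite cat_uniq us cat_uniq uq' ur /= negb_or wq' (has_sym q') q'r !andbT /=.
  apply/hasPn => t; rewrite mem_cat inE => /or3P[tq|/eqP->|tr]; apply: Xs => //.
    exact: (allP Xq').
  exact: (allP Xr).
(* The B(2,1;1) has the branch vertices z and w; its first path runs along
   r from z to u and then along the ear. *)
apply: (@has_B_of_paths _ _ z w (r2 ++ s) q' r1) => //.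
- by rewrite rcons_cat cat_path lr pus andbT.
- by rewrite rcons_path pr1 r1z.
- suff /perm_uniq -> : perm_eq (z :: w :: (r2 ++ s) ++ q' ++ r1)
                               (s ++ q' ++ w :: r1 ++ z :: r2) by [].
  rewrite perm_sym -cat_cons catA catA perm_catC /= perm_cons.
  by rewrite catA -cat_cons perm_catC /= perm_cons perm_catC !catA.
- by case: (r2) sn; case: (s).
Qed.

Lemma induced_subrel (X Y : {set V}) : X \subset Y -> subrel (induced X) (induced Y).
Proof. by move/subsetP=> sXY x y /and3P[/sXY xY /sXY yY axy]; apply/and3P. Qed.

Lemma strong_on_add_cycle (X : {set V}) u c :
  strong_on X -> u \in X -> cycle a (u :: c) -> strong_on (X :|: [set t in c]).
Proof.
move=> sX uX cyc; set Y := X :|: _.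
have uY : u \in Y by rewrite inE uX.
have cycY : cycle (induced Y) (u :: c).
  move: cyc; rewrite /= induced_path // => ->; rewrite andbT all_rcons.
  by apply/andP; split => //; apply/allP => t tc; rewrite !inE tc orbT.
have sXY : subrel (connect (induced X)) (connect (induced Y)).
  by apply: connect_sub => x y /(induced_subrel (subsetUl X [set t in c])) /connect1.
have linkY t : t \in Y -> connect (induced Y) t u && connect (induced Y) u t.
  case/setUP=> [tX|]; first by rewrite !sXY ?sX.
  by rewrite inE => tc; rewrite !(connect_cycle cycY) ?mem_head ?inE ?tc ?orbT.
by move=> x y /linkY/andP[xu _] /linkY/andP[_ uy]; apply: connect_trans xu uy.
Qed.

Lemma exists_ear (X : {set V}) x0 :
  strongly_connected a -> x0 \in X -> X != setT ->
  exists u v w s, [/\ u \in X, w \in X, uniq (v :: s), ~~ has (mem X) (v :: s)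
                    & path a u (rcons (v :: s) w)].
Proof.
move=> sc x0X; rewrite -subTset => /subsetPn[y0 _ y0X].
have [p [pp up lp]] := connect_dpath (sc x0 y0).
have /(first_hit pp)[q [v [_ [_ pqv vX qX]]]] : has [pred t | t \notin X] p.
  apply/hasP; exists y0 => //; move: (mem_last x0 p); rewrite lp inE.
  by case/predU1P=> // y0x0; rewrite y0x0 x0X in y0X.
have uX : last x0 q \in X.
  move: (mem_last x0 q); rewrite inE => /predU1P[->//|uq].
  by apply: contraR (hasPn qX _ uq) => /= ->.
move: pqv; rewrite rcons_path => /andP[_ auv].
have [p' [pp' up' lp']] := connect_dpath (sc v (last x0 q)).
have /(first_hit pp')[s [w [p2 [Ep' psw wX sX]]]] : has (mem X) p'.
  apply/hasP; exists (last x0 q) => //; move: (mem_last v p'); rewrite lp' inE.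
  by case/predU1P=> // uv; rewrite /= -uv uX in vX.
exists (last x0 q), v, w, s; split=> //.
- by apply: subseq_uniq up'; rewrite Ep' -cat_cons prefix_subseq.
- by apply/norP; split.
- by rewrite /= auv.
Qed.
End Ears.

Definition avoid_color (j : 'I_3) (b : bool) : 'I_3 := inord ((j + b).+1 %% 3).

Lemma avoid_color_neq j b : avoid_color j b != j.
Proof. by case: j => [[|[|[|?]]] ?] //; case: b; rewrite -val_eqE /= inordK. Qed.

Lemma avoid_color_inj j : injective (avoid_color j).
Proof.
case: j => [[|[|[|?]]] ?] // [] [] // /(congr1 val); by rewrite /= !inordK.
Qed.

Section ThreeColoring.
Variables (V : finType) (a : rel V).
Hypotheses (irr : irreflexive a) (noB : ~ has_B_subdivision a 2 1 1).

Lemma cycle_arc_next y (d : seq V) z :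
  cycle a (y :: d) -> uniq (y :: d) -> z \in d -> a y z -> d = z :: behead d.
Proof.
move=> + + zd; case/splitPr: zd => [[//|t d1] d2] cyc ud ayz.
by case: noB; apply: has_B_of_chord cyc ud _ ayz.
Qed.

Lemma cycle_arc_index u (c : seq V) y z :
  cycle a (u :: c) -> uniq (u :: c) -> y \in c -> z \in c -> a y z ->
  index z c = (index y c).+1.
Proof.
move=> + + yc; case/splitPr: yc => c1 c2 cyc uc zc ayz.
have rotc : rot (size (u :: c1)) ((u :: c1) ++ y :: c2) = y :: c2 ++ u :: c1.
  exact: rot_size_cat.
have zu : z != u by apply: contraTneq zc => ->; case/andP: uc.
have zy : z != y by apply: contraTneq ayz => ->; rewrite irr.
have zd : z \in c2 ++ u :: c1.
  by move: zc; rewrite !mem_cat !inE (negbTE zy) /= => /orP[]->; rewrite ?orbT.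
have := cycle_arc_next _ _ zd ayz; rewrite -rotc rot_cycle rot_uniq => /(_ cyc uc).
case: c2 {rotc zd} cyc uc zc => [_ _ _ [/eqP]|t c2 _ uc _ [tz]]; last subst t.
  by rewrite eq_sym (negbTE zu).
move: uc; rewrite cons_uniq cat_uniq => /andP[_ /and3P[_ /hasPn c1yz _]].
have yc1 : y \notin c1 by apply: c1yz; rewrite mem_head.
have zc1 : z \notin c1 by apply: c1yz; rewrite !inE eqxx orbT.
by rewrite !index_cat (negbTE yc1) (negbTE zc1) /= eq_sym (negbTE zy) !eqxx addn0 addn1.
Qed.

Definition proper_on (X : {set V}) (f : V -> 'I_3) :=
  {in X &, forall x y, a x y -> f x != f y}.

Section ClosedEar.
Variables (X : {set V}) (u : V) (c : seq V).
Hypotheses (sX : strong_on a X) (uX : u \in X) (uc : uniq (u :: c))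
  (cyc : cycle a (u :: c)) (cX : ~~ has (mem X) c).

Lemma closed_ear_entry x y : x \in X -> y \in c -> a x y -> x = u.
Proof.
move=> xX yc axy; have [//|xu] := eqVneq x u; case: noB.
move: uc cyc cX; case/splitPr: yc => c1 c2 uc' cyc' cX'.
apply: (has_B_of_open_ear sX xX uX xu (s := y :: c2)) => //.
- by apply: subseq_uniq uc'; rewrite -cat_cons suffix_subseq.
- by apply: contra cX'; rewrite has_cat orbC => ->.
- by move: cyc'; rewrite /= rcons_cat cat_path /= axy => /and3P[].
Qed.

Lemma closed_ear_exit x y : x \in c -> y \in X -> a x y -> y = u.
Proof.
move=> xc yX axy; have [//|yu] := eqVneq y u; case: noB.
move: uc cyc cX; case/splitPr: xc => c1 c2 uc' cyc' cX'.
rewrite eq_sym in yu; rewrite -cat_rcons in uc' cyc' cX'.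
apply: (has_B_of_open_ear sX uX yX yu (s := rcons c1 x)).
- by rewrite -size_eq0 size_rcons.
- by move: uc'; rewrite cons_uniq cat_uniq => /and3P[_ ->].
- by apply: contra cX'; rewrite has_cat => ->.
- move: cyc'; rewrite /= rcons_cat cat_path => /andP[pc1 _].
  by rewrite rcons_path pc1 last_rcons.
Qed.

Definition ear_coloring (f : V -> 'I_3) t :=
  if t \in X then f t else avoid_color (f u) (odd (index t c)).

Lemma proper_on_ear_coloring f :
  proper_on X f -> proper_on (X :|: [set t in c]) (ear_coloring f).
Proof.
move=> pf x y; have cX' t : t \in c -> t \notin X by move=> tc; apply: (hasPn cX).
rewrite !inE /ear_coloring => /orP[xX|xc] /orP[yX|yc] axy.
- by rewrite xX yX; apply: pf.
- by rewrite xX (negbTE (cX' y yc)) (closed_ear_entry xX yc axy) eq_sym avoid_color_neq.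
- by rewrite yX (negbTE (cX' x xc)) (closed_ear_exit xc yX axy) avoid_color_neq.
rewrite (negbTE (cX' x xc)) (negbTE (cX' y yc)) (inj_eq (@avoid_color_inj _)).
by rewrite (cycle_arc_index cyc uc xc yc axy) /=; case: (odd _).
Qed.
End ClosedEar.

Lemma extend_strong_proper (X : {set V}) f x0 :
  strongly_connected a -> strong_on a X -> proper_on X f -> x0 \in X -> X != setT ->
  exists (Y : {set V}) g, [/\ X \proper Y, strong_on a Y & proper_on Y g].
Proof.
move=> sc sX pf x0X XT.
have [u [v [w [s [uX wX us sX' pus]]]]] := exists_ear sc x0X XT.
have [wu|wu] := eqVneq w u; last first.
  by case: noB; apply: (has_B_of_open_ear sX uX wX _ _ us sX' pus); rewrite // eq_sym.
subst w; have uc : uniq (u :: v :: s) by rewrite cons_uniq us (contraL (hasPn sX' u)) ?negbK.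
exists (X :|: [set t in v :: s]), (ear_coloring X u (v :: s) f); split.
- by apply/properUl/subsetPn; exists v; [rewrite inE mem_head | case/norP: sX'].
- exact: strong_on_add_cycle sX uX pus.
- exact: proper_on_ear_coloring sX uX uc pus sX' f pf.
Qed.

Lemma strong_proper_colorable (X : {set V}) f x0 :
  strongly_connected a -> strong_on a X -> proper_on X f -> x0 \in X -> colorable a 3.
Proof.
move=> sc; have [n] := ubnP #|~: X|; elim: n X f => // n IH X f ltX sX pf x0X.
have [XT|XT] := eqVneq X setT.
  exists f => x y; rewrite XT in pf.
  by case/orP=> [axy|ayx]; [|rewrite eq_sym]; apply: pf; rewrite ?inE.
have [Y [g [XY sY pg]]] := extend_strong_proper sc sX pf x0X XT.
apply: (IH Y g) => //; last exact: subsetP (proper_sub XY) x0 x0X.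
by rewrite -ltnS (leq_trans _ ltX) // ltnS proper_card // properC.
Qed.

Lemma three_colorable : strongly_connected a -> colorable a 3.
Proof.
move=> sc; have [r _|V0] := pickP (@predT V); last by exists (fun=> ord0) => x; have := V0 x.
apply: (@strong_proper_colorable [set r] (fun=> ord0) r sc); last by rewrite inE.
- by move=> x y /set1P-> /set1P->; apply: connect0.
- by move=> x y /set1P-> /set1P->; rewrite irr.
Qed.
End ThreeColoring.

Theorem mainTheorem2 (V : finType) (a : rel V) (irr : irreflexive a) :
  strongly_connected a -> 4 <= chi irr -> has_B_subdivision a 2 1 1.
Proof.
move=> sc chi4; apply: NNPP => noB.
by have := chi_le irr (three_colorable irr noB sc); rewrite leqNgt chi4.
Qed.
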